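(* Let $d_{2,P}(t,x)=x^4+2t^2x^2-8t^2x+t^4-t(4x^3-4t^2x+4t^2)$. If $t_0,x_0\in\mathbb Z$ satisfy $d_{2,P}(t_0,x_0)=0$, then for some $n\in\mathbb Z$, $t_0$ is given by one of the following: (1) $t_0=64(u v^3+3v^4)$ with $u=\frac{(1+\sqrt2)^{2n}+(1-\sqrt2)^{2n}}{2}$, $v=\frac{(1+\sqrt2)^{2n}-(1-\sqrt2)^{2n}}{4\sqrt2}$; (2) $t_0=4(uv^3+3v^4)$ with $u=(1+\sqrt2)^{2n+1}+(1-\sqrt2)^{2n+1}$, $v=\frac{(1+\sqrt2)^{2n+1}-(1-\sqrt2)^{2n+1}}{2\sqrt2}$; (3) $t_0=uv^3+3v^4$ with $u=\sqrt2\big((1+\sqrt2)^{2n+1}-(1-\sqrt2)^{2n+1}\big)$, $v=\frac{(1+\sqrt2)^{2n+1}+(1-\sqrt2)^{2n+1}}{2}$; (4) $t_0=uv^3+3v^4$ with $u=\sqrt2\big((1+\sqrt2)^{2n}-(1-\sqrt2)^{2n}\big)$, $v=\frac{(1+\sqrt2)^{2n}+(1-\sqrt2)^{2n}}{2}$. *)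

From Stdlib Require Import ZArith Reals.

Open Scope Z_scope.

Definition d2P (t x : Z) : Z :=
  x^4 + 2*t^2*x^2 - 8*t^2*x + t^4 - t*(4*x^3 - 4*t^2*x + 4*t^2).

Close Scope Z_scope.
Open Scope R_scope.

Definition alpha : R := 1 + sqrt 2.
Definition beta : R := 1 - sqrt 2.

Definition F (u v : R) : R := u * v^3 + 3 * v^4.

(* Completing the square gives d2P t x = (x^2 - 2 t x - t^2)^2 - (2t)^2 (2x + t), so an integer
   root forces 2x + t = s^2; substituting back, the same trick forces 2(s+1)(s+2) = w^2, i.e.
   (m, w) := (2s + 3, w) solves the Pell equation m^2 - 2 w^2 = 1 and 4t = (m - 3)(3m - 1 - 4w).
   By descent, m + w sqrt 2 = +-(1 + sqrt 2)^(2j). Writing (1 + sqrt 2)^j = a (1 + sqrt 2), the four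
   cases of the statement are the four choices of the sign and of the parity of j - 1, and in each
   case the formula for t is a polynomial identity modulo sqrt 2 ^ 2 = 2. *)

From Stdlib Require Import ZArith Zwf Reals Lia Lra Nsatz.
Open Scope R_scope.

Lemma square_eq_square_mul (a K N : Z) :
  a <> 0%Z -> (K * K = a * a * N)%Z -> exists s, (N = s * s /\ K = a * s)%Z.
Proof.
  intros ha hK.
  set (g := Z.gcd K a).
  assert (hg : g <> 0%Z) by (unfold g; intro H; apply Z.gcd_eq_0 in H; lia).
  destruct (Z.gcd_divide_l K a) as [k hk], (Z.gcd_divide_r K a) as [c hc].
  fold g in hk, hc.
  assert (hcop : Z.gcd k c = 1%Z).
  { rewrite <- (Z.div_mul k g hg), <- (Z.div_mul c g hg), <- hk, <- hc.
    now apply Z.gcd_div_gcd. }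
  assert (hkc : (k * k = c * c * N)%Z).
  { apply (Z.mul_reg_l _ _ (g * g)); [lia|]. rewrite hk, hc in hK. nia. }
  assert (hc_dvd_k : (c | k)%Z).
  { apply (Z.gauss _ k); [exists (c * N)%Z; rewrite hkc; ring | now rewrite Z.gcd_comm]. }
  assert (hc_unit : (c | 1)%Z).
  { rewrite <- hcop. apply Z.gcd_greatest; auto using Z.divide_refl. }
  apply Z.divide_1_r in hc_unit as [-> | ->].
  - exists k. lia.
  - exists (- k)%Z. lia.
Qed.

Lemma d2P_complete_square (t x : Z) :
  d2P t x = ((x*x - 2*t*x - t*t) * (x*x - 2*t*x - t*t) - (2*t) * (2*t) * (2*x + t))%Z.
Proof. unfold d2P. ring. Qed.

Lemma d2P_root_pell (t x : Z) :
  d2P t x = 0%Z ->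
  exists m w, (m*m - 2*w*w = 1 /\ 4*t = (m - 3) * (3*m - 1 - 4*w))%Z.
Proof.
  rewrite d2P_complete_square. intro h.
  destruct (Z.eq_dec t 0) as [-> | ht]; [now exists 3%Z, 2%Z|].
  destruct (square_eq_square_mul (2*t) (x*x - 2*t*x - t*t) (2*x + t)) as [s [hs hK]];
    [lia | lia |].
  assert (ht' : t = (s*s - 2*x)%Z) by lia. subst t.
  assert (hs0 : s <> 0%Z).
  { intros ->. assert (hx : (x * x = 0)%Z) by nia. assert (x = 0%Z) by nia. lia. }
  destruct (square_eq_square_mul s (x + s*s + 2*s) (2 * (s+1) * (s+2))) as [w [hw hx]];
    [exact hs0 | |].
  { assert (hid : ((x + s*s + 2*s) * (x + s*s + 2*s) - s * s * (2 * (s+1) * (s+2))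
      = (x*x - 2*(s*s - 2*x)*x - (s*s - 2*x)*(s*s - 2*x)) - 2*(s*s - 2*x)*s)%Z) by ring.
    lia. }
  exists (2*s + 3)%Z, w. split.
  - nia.
  - replace x with (s*w - s*s - 2*s)%Z by lia. ring.
Qed.

Lemma sqrt2_sqr : sqrt 2 * sqrt 2 = 2.
Proof. apply sqrt_sqrt. lra. Qed.

Lemma alpha_mul_beta : alpha * beta = -1.
Proof. unfold alpha, beta. pose proof sqrt2_sqr. nsatz. Qed.

Lemma sqrt2_neq0 : sqrt 2 <> 0.
Proof. intro h. pose proof sqrt2_sqr as h2. rewrite h in h2. lra. Qed.

Lemma alpha_neq0 : alpha <> 0.
Proof. intro h. pose proof alpha_mul_beta as hab. rewrite h in hab. lra. Qed.

Lemma beta_neq0 : beta <> 0.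
Proof. intro h. pose proof alpha_mul_beta as hab. rewrite h in hab. lra. Qed.

(* (3m - 4w) + (3w - 2m) sqrt 2 = (3 - 2 sqrt 2)(m + w sqrt 2) is a smaller solution. *)
Lemma pell_descent (m w : Z) :
  (0 < m)%Z -> (0 < w)%Z -> (m*m - 2*w*w = 1)%Z ->
  (0 < 3*m - 4*w /\ 0 <= 3*w - 2*m < w)%Z.
Proof.
  intros hm hw hp.
  assert (hw2 : (2 <= w)%Z).
  { destruct (Z.eq_dec w 1) as [-> | ]; [destruct (Z.le_gt_cases m 1); nia | lia]. }
  split; [|split].
  - assert ((3*m - 4*w) * (3*m + 4*w) = 9 + 2*w*w)%Z by nia. nia.
  - assert ((3*w - 2*m) * (3*w + 2*m) = w*w - 4)%Z by nia. nia.
  - assert ((m - w) * (m + w) = 1 + w*w)%Z by nia. nia.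
Qed.

Lemma pell_nonneg_solution (w m : Z) :
  (0 <= w)%Z -> (0 < m)%Z -> (m*m - 2*w*w = 1)%Z ->
  exists k : nat, IZR m + IZR w * sqrt 2 = (alpha ^ k) ^ 2 /\
                  IZR m - IZR w * sqrt 2 = (beta ^ k) ^ 2.
Proof.
  revert m. induction w as [w IH] using (well_founded_induction (Zwf_well_founded 0)).
  intros m hw hm hp.
  destruct (Z.eq_dec w 0) as [-> | hw0].
  { replace m with 1%Z by nia. exists 0%nat. simpl. split; ring. }
  destruct (pell_descent m w hm ltac:(lia) hp) as [hm' hw'].
  destruct (IH (3*w - 2*m)%Z) with (3*m - 4*w)%Z as [k [hA hB]];
    [unfold Zwf; lia | lia | exact hm' | nia |].
  exists (S k).
  rewrite <- (tech_pow_Rmult alpha k), <- (tech_pow_Rmult beta k), !Rpow_mult_distr,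
    <- hA, <- hB, !minus_IZR, !mult_IZR.
  unfold alpha, beta. pose proof sqrt2_sqr. cbn [pow]. split; nsatz.
Qed.

Lemma powerRZ_opp_sqr (x y : R) (k : nat) :
  x * y = -1 -> powerRZ x (- Z.of_nat k) ^ 2 = (y ^ k) ^ 2.
Proof.
  intro hxy.
  assert (hx : x <> 0) by (intro h; rewrite h in hxy; lra).
  assert (hxk : x ^ k <> 0) by now apply pow_nonzero.
  rewrite powerRZ_neg', <- pow_powerRZ.
  assert (hprod : (x ^ k * y ^ k) ^ 2 = 1).
  { rewrite <- Rpow_mult_distr, hxy, <- pow_mult, Nat.mul_comm, pow_mult.
    replace ((-1) ^ 2) with 1 by ring. apply pow1. }
  transitivity ((x ^ k * y ^ k) ^ 2 * (/ x ^ k) ^ 2); [rewrite hprod; ring | field; exact hxk].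
Qed.

Lemma pell_solution (m w : Z) :
  (m*m - 2*w*w = 1)%Z ->
  exists e j, (e = 1 \/ e = -1) /\
    IZR m + IZR w * sqrt 2 = e * powerRZ alpha j ^ 2 /\
    IZR m - IZR w * sqrt 2 = e * powerRZ beta j ^ 2.
Proof.
  intro hp.
  assert (hm : m <> 0%Z) by nia.
  destruct (pell_nonneg_solution (Z.abs w) (Z.abs m)) as [k [hA hB]];
    [lia | lia | destruct (Z.abs_spec m), (Z.abs_spec w); nia |].
  pose proof alpha_mul_beta as hab.
  assert (hba : beta * alpha = -1) by lra.
  pose proof (powerRZ_opp_sqr alpha beta k hab) as hAk.
  pose proof (powerRZ_opp_sqr beta alpha k hba) as hBk.
  destruct (Z.abs_spec m) as [[_ Hm] | [_ Hm]], (Z.abs_spec w) as [[_ Hw] | [_ Hw]];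
    rewrite Hm, Hw, ?opp_IZR in hA, hB.
  - exists 1, (Z.of_nat k). rewrite <- !pow_powerRZ. split; [now left | split; lra].
  - exists 1, (- Z.of_nat k)%Z. rewrite hAk, hBk. split; [now left | split; lra].
  - exists (-1), (- Z.of_nat k)%Z. rewrite hAk, hBk. split; [now right | split; lra].
  - exists (-1), (Z.of_nat k). rewrite <- !pow_powerRZ. split; [now right | split; lra].
Qed.

Lemma powerRZ_m1_even (n : Z) : powerRZ (-1) (2 * n) = 1.
Proof.
  replace (2 * n)%Z with (n + n)%Z by ring.
  rewrite powerRZ_add, <- powerRZ_mult by lra.
  replace (-1 * -1) with 1 by ring. apply powerRZ_R1.
Qed.

Lemma powerRZ_m1_odd (n : Z) : powerRZ (-1) (2 * n + 1) = -1.
Proof. rewrite powerRZ_add, powerRZ_m1_even by lra. simpl. ring. Qed.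

Section PellToF.

Variables (a b e M W T : R).
Hypothesis hM : M + W * sqrt 2 = e * (a * alpha) ^ 2.
Hypothesis hW : M - W * sqrt 2 = e * (b * beta) ^ 2.
Hypothesis hT : 4 * T = (M - 3) * (3 * M - 1 - 4 * W).

(* nsatz works over polynomials: each quotient below is first abstracted by its defining equation. *)
Ltac pell_nsatz :=
  unfold alpha, beta in *; pose proof sqrt2_sqr; cbn [pow] in *; nsatz.

Lemma pell_to_F_even_pos :
  e = 1 -> a * b = 1 -> T = 64 * F ((a + b) / 2) ((a - b) / (4 * sqrt 2)).
Proof.
  intros -> hab. unfold F.
  set (u := (a + b) / 2); set (v := (a - b) / (4 * sqrt 2)).
  assert (hu : 2 * u = a + b) by (unfold u; field).
  assert (hv : 4 * sqrt 2 * v = a - b) by (unfold v; field; exact sqrt2_neq0).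
  clearbody u v. pell_nsatz.
Qed.

Lemma pell_to_F_odd_neg :
  e = -1 -> a * b = -1 -> T = 4 * F (a + b) ((a - b) / (2 * sqrt 2)).
Proof.
  intros -> hab. unfold F.
  set (v := (a - b) / (2 * sqrt 2)).
  assert (hv : 2 * sqrt 2 * v = a - b) by (unfold v; field; exact sqrt2_neq0).
  clearbody v. pell_nsatz.
Qed.

Lemma pell_to_F_odd_pos :
  e = 1 -> a * b = -1 -> T = F (sqrt 2 * (a - b)) ((a + b) / 2).
Proof.
  intros -> hab. unfold F.
  set (v := (a + b) / 2).
  assert (hv : 2 * v = a + b) by (unfold v; field).
  clearbody v. pell_nsatz.
Qed.

Lemma pell_to_F_even_neg :
  e = -1 -> a * b = 1 -> T = F (sqrt 2 * (a - b)) ((a + b) / 2).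
Proof.
  intros -> hab. unfold F.
  set (v := (a + b) / 2).
  assert (hv : 2 * v = a + b) by (unfold v; field).
  clearbody v. pell_nsatz.
Qed.

End PellToF.

Theorem proposition4p7 (t0 x0 : Z) :
  d2P t0 x0 = 0%Z ->
  exists n : Z,
    (IZR t0 = 64 * F
        ((powerRZ alpha (2*n) + powerRZ beta (2*n)) / 2)
        ((powerRZ alpha (2*n) - powerRZ beta (2*n)) / (4 * sqrt 2)))
    \/
    (IZR t0 = 4 * F
        (powerRZ alpha (2*n+1) + powerRZ beta (2*n+1))
        ((powerRZ alpha (2*n+1) - powerRZ beta (2*n+1)) / (2 * sqrt 2)))
    \/
    (IZR t0 = F
        (sqrt 2 * (powerRZ alpha (2*n+1) - powerRZ beta (2*n+1)))
        ((powerRZ alpha (2*n+1) + powerRZ beta (2*n+1)) / 2))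
    \/
    (IZR t0 = F
        (sqrt 2 * (powerRZ alpha (2*n) - powerRZ beta (2*n)))
        ((powerRZ alpha (2*n) + powerRZ beta (2*n)) / 2)).
Proof.
  intro hroot.
  destruct (d2P_root_pell t0 x0 hroot) as (m & w & hpell & ht).
  apply (f_equal IZR) in ht. rewrite !mult_IZR, !minus_IZR, !mult_IZR in ht.
  destruct (pell_solution m w hpell) as (e & j & he & hA & hB).
  replace j with ((j - 1) + 1)%Z in hA, hB by ring.
  rewrite powerRZ_add in hA by exact alpha_neq0.
  rewrite powerRZ_add in hB by exact beta_neq0.
  simpl (powerRZ _ 1) in hA, hB. rewrite !Rmult_1_r in hA, hB.
  assert (hab : forall k, powerRZ alpha k * powerRZ beta k = powerRZ (-1) k)
    by (intro; now rewrite <- powerRZ_mult, alpha_mul_beta).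
  destruct (Z.Even_or_Odd (j - 1)) as [[n hn] | [n hn]]; rewrite hn in hA, hB; exists n.
  - destruct he as [he | he].
    + left. eapply pell_to_F_even_pos; eauto. now rewrite hab, powerRZ_m1_even.
    + right; right; right. eapply pell_to_F_even_neg; eauto. now rewrite hab, powerRZ_m1_even.
  - destruct he as [he | he].
    + right; right; left. eapply pell_to_F_odd_pos; eauto. now rewrite hab, powerRZ_m1_odd.
    + right; left. eapply pell_to_F_odd_neg; eauto. now rewrite hab, powerRZ_m1_odd.
Qed.
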